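(* Let $p$ be a prime and $(K,|\cdot|)$ an ultrametric field of residue characteristic $p$. Let $\lambda\in K$ with $|\lambda|=1$ such that the order $q$ of $\widetilde\lambda$ in $\widetilde K^*$ is finite, and let $f(z)=\lambda z+\cdots\in\mathcal{O}_K[[z]]$. (1) Suppose $\lambda^q\ne1$ and let $w_0$ be a periodic point of $f$ of minimal period $q$ (with $w_0\ne0$ if $q=1$). Then $|w_0|\ge|\lambda^q-1|^{1/q}$, with equality if and only if $\mathrm{wideg}(f^q(z)-z)=q+1$. Moreover, if equality holds, then the cycle containing $w_0$ is the only cycle of minimal period $q$ of $f$ in $\mathfrak{m}_K\setminus\{0\}$, and every point $w_0'$ of this cycle satisfies $|w_0'|=|\lambda^q-1|^{1/q}$. (2) Let $n\ge1$ be an integer with $\lambda^{qp^n}\ne1$ and let $z_0$ be a periodic point of $f$ of minimal period $qp^n$. Then $|z_0|\ge\left|\frac{\lambda^{qp^n}-1}{\lambda^{qp^{n-1}}-1}\right|^{1/(qp^n)}$, with equality if and only if $\mathrm{wideg}\left(\frac{f^{qp^n}(z)-z}{f^{qp^{n-1}}(z)-z}\right)=qp^n$. Moreover, if equality holds, then the cycle containing $z_0$ is the only cycle of minimal period $qp^n$ of $f$, and every point $z_0'$ in this cycle satisfies the equality with $z_0$ replaced by $z_0'$.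
   Context: $\mathcal{O}_K=\{|z|\le1\}$, $\mathfrak{m}_K=\{|z|<1\}$, $\widetilde K=\mathcal{O}_K/\mathfrak{m}_K$. Periodic points are taken in $\mathfrak{m}_K$, which $f$ maps to itself. For $h\in\mathcal{O}_K[[z]]$, the Weierstrass degree $\mathrm{wideg}(h)$ is the order (lowest degree of a nonzero term, $+\infty$ for $0$) of the reduction $\widetilde h\in\widetilde K[[\zeta]]$. The power series $f^{qp^{n-1}}(z)-z$ divides $f^{qp^n}(z)-z$ in $\mathcal{O}_K[[z]]$, so the quotient above lies in $\mathcal{O}_K[[z]]$. *)

From HB Require Import structures.
From mathcomp Require Import all_boot all_order all_algebra.
From mathcomp Require Import reals exp.
From Stdlib Require Import ClassicalEpsilon.

Set Implicit Arguments.
Unset Strict Implicit.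
Unset Printing Implicit Defensive.
Import Order.TTheory GRing.Theory Num.Theory.
Local Open Scope ring_scope.

Section Defs.
Variables (K : fieldType) (R : realType) (abs : K -> R).

Definition ultrametric_abs : Prop :=
  [/\ abs 0 = 0,
      (forall x, abs x = 0 -> x = 0),
      (forall x y, abs (x * y) = abs x * abs y) &
      (forall x y, abs (x + y) <= Num.max (abs x) (abs y))].

Definition abs_complete : Prop :=
  forall u : nat -> K,
    (forall e : R, 0 < e -> exists N, forall m n, (N <= m)%N -> (N <= n)%N ->
        abs (u m - u n) < e) ->
    exists l, forall e : R, 0 < e -> exists N, forall n, (N <= n)%N ->
        abs (u n - l) < e.

Definition series := nat -> K.

Definition integral (a : series) : Prop := forall n, abs (a n) <= 1.

Definition sX : series := fun n => (n == 1)%:R.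

Definition smul (a b : series) : series :=
  fun n => \sum_(i < n.+1) a i * b (n - i)%N.

Fixpoint spow (a : series) (k : nat) : series :=
  if k is k'.+1 then smul a (spow a k') else (fun n => (n == 0)%:R).

(* formal composition g o h (h has zero constant term) *)
Definition scomp (g h : series) : series :=
  fun n => \sum_(k < n.+1) g k * spow h k n.

Fixpoint siter (f : series) (m : nat) : series :=
  if m is m'.+1 then scomp f (siter f m') else sX.

(* wideg h = n : the reduction of h has order n *)
Definition wideg_eq (h : series) (n : nat) : Prop :=
  ~ (abs (h n) < 1) /\ forall k, (k < n)%N -> abs (h k) < 1.

Definition ps_sum (a : series) (z s : K) : Prop :=
  forall e : R, 0 < e -> exists N, forall n, (N <= n)%N ->
    abs (s - \sum_(i < n) a i * z ^+ i) < e.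

(* the value of a at z (meaningful when the series converges) *)
Definition ps_eval (a : series) (z : K) : K :=
  epsilon (inhabits 0) (fun s => ps_sum a z s).

Definition min_period (F : K -> K) (w : K) (m : nat) : Prop :=
  (0 < m)%N /\ iter m F w = w /\ forall k, (0 < k < m)%N -> iter k F w <> w.

End Defs.

From HB Require Import structures.
From mathcomp Require Import all_boot all_order all_algebra.
From mathcomp Require Import reals exp.
From Stdlib Require Import ClassicalEpsilon FunctionalExtensionality.
From mathcomp Require Import ring lra zify.
Import Order.TTheory GRing.Theory Num.Theory.
Local Open Scope ring_scope.
Set Implicit Arguments.
Unset Strict Implicit.
Unset Printing Implicit Defensive.

(* Let [N] be the period of the cycle of [z0] and [h] an integral power series
   vanishing on that cycle: [(f^q(z) - z)/z] in (1), and the quotient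
   [(f^N(z) - z)/(f^(N/p)(z) - z)] in (2), whose roots include every point fixed by
   [f^N] but not by [f^(N/p)].  As [|lam| = 1], [f] is an isometry of the open disc,
   so the [N] roots of [h] on the cycle all have absolute value [r = |z0|].
   Dividing [h] successively by the linear factors [z - x] (legitimate because
   [|x| < 1]) gives [h = prod_x (z - x) * g] with [g] integral, hence
   [|h(0)| = r^N |g(0)| <= r^N]; moreover [|g(0)| = 1] exactly when the reduction
   of [h] starts in degree [N], and then [g] has no zero in the disc, so the cycle
   of [z0] contains every nonzero root of [h].  Divisibility of [f^(Mp)(z) - z] by
   [f^M(z) - z] comes from [a(w) - a(z) = (w - z) D(w, z)] for power series. *)

Lemma geometric_lt (R : realType) (r e : R) : 0 <= r -> r < 1 -> 0 < e ->
  exists N, forall n, (N <= n)%N -> r ^+ n < e.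
Proof.
move=> r0 r1 e0.
have [->|rn0] := eqVneq r 0.
  by exists 1%N => -[|n]; rewrite ?expr0n.
have rp : 0 < r by rewrite lt_neqAle eq_sym rn0 r0.
set d := r^-1 - 1.
have d0 : 0 < d by rewrite /d subr_gt0 invf_gt1.
have bernoulli n : 1 + n%:R * d <= (1 + d) ^+ n.
  elim: n => [|n IH]; first by rewrite mul0r addr0 expr0.
  rewrite exprS -natr1 mulrDl mul1r.
  have : (1 + d) * (1 + n%:R * d) <= (1 + d) * (1 + d) ^+ n.
    by apply: ler_wpM2l => //; lra.
  have : 0 <= n%:R * d * d by rewrite !mulr_ge0 // ltW.
  lra.
have hb : e^-1 / d < (Num.Def.archi_bound (e^-1 / d))%:R.
  by apply: archi_boundP; rewrite ltW // divr_gt0 // invr_gt0.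
exists (Num.Def.archi_bound (e^-1 / d)) => n nN.
have h1 : e^-1 < n%:R * d.
  by rewrite -ltr_pdivrMr //; apply: lt_le_trans hb _; rewrite ler_nat.
have : e^-1 < (r ^+ n)^-1.
  by rewrite -exprVn -[r^-1](subrK 1) addrC -/d; apply: lt_le_trans (bernoulli n); lra.
by rewrite ltf_pV2 ?posrE ?exprn_gt0 ?invr_gt0.
Qed.

Lemma powR_inv_le (R : realType) (A r G : R) (N : nat) : (0 < N)%N -> 0 < r ->
  0 <= G -> G <= 1 -> A = r ^+ N * G ->
  A `^ N%:R^-1 <= r /\ (r = A `^ N%:R^-1 <-> G = 1).
Proof.
move=> N0 r0 G0 G1 eA.
have A0 : 0 <= A by rewrite eA mulr_ge0 // exprn_ge0 // ltW.
set c := A `^ N%:R^-1.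
have c0 : 0 <= c := powR_ge0 _ _.
have cN : c ^+ N = A.
  by rewrite -powR_mulrn // -powRrM mulVf ?powRr1 // pnatr_eq0 -lt0n.
have rN0 : 0 < r ^+ N by apply: exprn_gt0.
split.
  have [cnn rnn] : c \is Num.nneg /\ r \is Num.nneg by rewrite !nnegrE c0 ltW.
  by rewrite -(ler_pXn2r N0 cnn rnn) cN eA ler_piMr // ltW.
split => [erc|eG].
  by apply: (mulfI (lt0r_neq0 rN0)); rewrite mulr1 -eA -cN erc.
by apply/eqP; rewrite -(eqrXn2 N0 (ltW r0) c0) cN eA eG mulr1.
Qed.

Section Cycles.
Variables (K : fieldType) (F : K -> K).

Lemma iter_comm a b x : iter a F (iter b F x) = iter b F (iter a F x).
Proof. by rewrite -!iterD addnC. Qed.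

Lemma iter_cycle_fixed z N i : iter N F z = z -> iter N F (iter i F z) = iter i F z.
Proof. by move=> hN; rewrite iter_comm hN. Qed.

Lemma iter_cycle_not_fixed z N M i : min_period F z N -> (0 < M < N)%N -> (i < N)%N ->
  iter M F (iter i F z) != iter i F z.
Proof.
case=> _ [hN hmin] hM iN; apply/eqP => e.
have back : iter (N - i) F (iter i F z) = z by rewrite -iterD subnK ?hN // ltnW.
by apply: (hmin M hM); rewrite -{1}back -iter_comm e back.
Qed.

Lemma cycle_uniq z N : min_period F z N -> uniq [seq iter i F z | i <- iota 0 N].
Proof.
move=> hper; rewrite map_inj_in_uniq ?iota_uniq // => i j.
rewrite !mem_iota !add0n /= => iN jN.
wlog ij : i j iN jN / (i <= j)%N.
  move=> hw e; case: (leqP i j) => [ij|/ltnW ji]; first exact: hw.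
  exact/esym/hw.
move=> e; apply/eqP; rewrite eqn_leq ij /= leqNgt; apply/negP => lt_ij.
have hM : (0 < j - i < N)%N by rewrite subn_gt0 lt_ij (leq_ltn_trans (leq_subr i j) jN).
have := iter_cycle_not_fixed hper hM iN.
by rewrite -iterD subnK ?(ltnW lt_ij) // -e eqxx.
Qed.

Lemma cycle_mem z N x : x \in [seq iter i F z | i <- iota 0 N] ->
  exists2 i, (i < N)%N & x = iter i F z.
Proof. by case/mapP => i; rewrite mem_iota add0n => /andP[_ iN] ->; exists i. Qed.

End Cycles.

Section Ultrametric.
Variables (K : fieldType) (R : realType) (abs : K -> R).
Hypothesis habs : ultrametric_abs abs.

Lemma abs0 : abs 0 = 0. Proof. by case: habs. Qed.
Lemma abs_eq0 x : abs x = 0 -> x = 0. Proof. by case: habs => _ h _ _; apply: h. Qed.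
Lemma absM x y : abs (x * y) = abs x * abs y. Proof. by case: habs => _ _ h _; apply: h. Qed.
Lemma absD x y : abs (x + y) <= Num.max (abs x) (abs y).
Proof. by case: habs => _ _ _ h; apply: h. Qed.

Lemma abs1 : abs 1 = 1.
Proof.
have h1 : abs 1 != 0 by apply/eqP => /abs_eq0/eqP; rewrite oner_eq0.
by apply: (mulIf h1); rewrite mul1r -absM mulr1.
Qed.

(* Positivity of [abs] is not an axiom of [ultrametric_abs]: a priori
   [abs (-1) = -1] is possible, and then every [n%:R] has absolute value 0 or 1. *)
Lemma absN1_eq1 (n : nat) : (0 < n)%N -> abs (n%:R : K) < 1 -> abs (-1) = 1.
Proof.
move=> n0 hn.
have /orP[/eqP//|/eqP hm] : (abs (-1) == 1) || (abs (-1) == -1).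
  rewrite -subr_eq0 -addr_eq0 -mulf_eq0.
  by rewrite mulrDr mulr1 mulrBl -absM mulrNN mulr1 abs1 mul1r addrA subrK subrr.
have absN x : abs (- x) = - abs x by rewrite -mulN1r absM hm mulN1r.
have abs_nat m : (m%:R : K) = 0 \/ abs (m%:R : K) = 1.
  elim: m => [|m [IH|IH]]; first by left.
    by right; rewrite -natr1 IH add0r abs1.
  right; have h1 := absD m%:R 1; have h2 := absD (- m%:R) (- 1).
  rewrite IH abs1 maxxx in h1; rewrite !absN IH abs1 maxxx -opprD absN lerN2 in h2.
  by apply/eqP; rewrite eq_le -natr1 h1 h2.
case: (abs_nat n) => [n_R0|]; last by move=> e; rewrite e ltxx in hn.
case: n n0 hn n_R0 => [|n] // _ _; rewrite -natr1 => /eqP; rewrite addr_eq0 => /eqP e.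
by case: (abs_nat n); rewrite e // => /eqP; rewrite oppr_eq0 oner_eq0.
Qed.

Hypothesis absN1 : abs (-1) = 1.

Lemma absN x : abs (- x) = abs x.
Proof. by rewrite -mulN1r absM absN1 mul1r. Qed.
Lemma abs_ge0 x : 0 <= abs x.
Proof. by have := absD x (- x); rewrite subrr abs0 absN maxxx. Qed.
Lemma absB x y : abs (x - y) <= Num.max (abs x) (abs y).
Proof. by rewrite -(absN y) absD. Qed.
Lemma distC x y : abs (x - y) = abs (y - x).
Proof. by rewrite -absN opprB. Qed.
Lemma absX x n : abs (x ^+ n) = abs x ^+ n.
Proof. by elim: n => [|n IH]; rewrite ?expr0 ?abs1 // !exprS absM IH. Qed.
Lemma abs_gt0 x : x != 0 -> 0 < abs x.
Proof. by move=> xn; rewrite lt_neqAle abs_ge0 andbT eq_sym; apply: contra xn => /eqP/abs_eq0->. Qed.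
Lemma abs_eq0E x : (abs x == 0) = (x == 0).
Proof. by apply/eqP/eqP => [/abs_eq0|->]; rewrite ?abs0. Qed.
Lemma absV x : abs (x^-1) = (abs x)^-1.
Proof.
have [->|xn] := eqVneq x 0; first by rewrite invr0 abs0 invr0.
by apply: (mulfI (lt0r_neq0 (abs_gt0 xn))); rewrite -absM mulfV // divff ?abs1 ?lt0r_neq0 ?abs_gt0.
Qed.
Lemma absD_le x y c : abs x <= c -> abs y <= c -> abs (x + y) <= c.
Proof. by move=> h1 h2; apply: le_trans (absD x y) _; rewrite ge_max h1 h2. Qed.
Lemma absD_lt x y c : abs x < c -> abs y < c -> abs (x + y) < c.
Proof. by move=> h1 h2; apply: le_lt_trans (absD x y) _; rewrite gt_max h1 h2. Qed.
Lemma absB_le x y c : abs x <= c -> abs y <= c -> abs (x - y) <= c.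
Proof. by move=> h1 h2; apply: absD_le; rewrite ?absN. Qed.
Lemma absB_lt x y c : abs x < c -> abs y < c -> abs (x - y) < c.
Proof. by move=> h1 h2; apply: absD_lt; rewrite ?absN. Qed.
Lemma absM_le1 x y : abs x <= 1 -> abs y <= 1 -> abs (x * y) <= 1.
Proof. by move=> h1 h2; rewrite absM mulr_ile1 ?abs_ge0. Qed.
Lemma absM_lt1 x y : abs x < 1 -> abs y <= 1 -> abs (x * y) < 1.
Proof. by move=> h1 h2; rewrite absM; apply: le_lt_trans h1; rewrite ler_piMr ?abs_ge0. Qed.

Lemma abs_sum_le (I : Type) (r : seq I) (P : pred I) (F : I -> K) c :
  0 <= c -> (forall i, P i -> abs (F i) <= c) -> abs (\sum_(i <- r | P i) F i) <= c.
Proof. by move=> c0 h; apply: (big_ind (fun x => abs x <= c)); rewrite ?abs0 // => x y; apply: absD_le. Qed.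

Lemma abs_eq_of_lt x y : abs (x - y) < abs y -> abs x = abs y.
Proof.
move=> h; apply/eqP; rewrite eq_le; apply/andP; split.
  by rewrite -[x](subrK y) addrC; apply: absD_le => //; apply: ltW.
rewrite leNgt; apply/negP => hlt; have := absB x (x - y).
by rewrite opprB addrC subrK; apply/negP; rewrite -ltNge gt_max hlt.
Qed.

Lemma abs_small_eq0 x : (forall e : R, 0 < e -> abs x < e) -> x = 0.
Proof.
move=> h; apply: abs_eq0; apply/eqP; rewrite eq_le abs_ge0 andbT leNgt.
by apply/negP => hx; have := h _ hx; rewrite ltxx.
Qed.

Lemma abs_eq1 x : abs x <= 1 -> (abs x = 1 <-> ~ abs x < 1).
Proof.
move=> x1; split; first by move=> ->; rewrite ltxx.
by move=> h; apply/eqP; rewrite eq_le x1 leNgt; apply/negP.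
Qed.

Hypothesis hcompl : abs_complete abs.

Local Notation PS := (ps_sum abs).
Local Notation EV := (ps_eval abs).

Definition ps_partial (a : series K) z n := \sum_(i < n) a i * z ^+ i.

Lemma ps_partialS a z n : ps_partial a z n.+1 = ps_partial a z n + a n * z ^+ n.
Proof. by rewrite /ps_partial big_ord_recr. Qed.

Lemma dist_ps_partial a z n m : integral abs a -> abs z <= 1 -> (n <= m)%N ->
  abs (ps_partial a z m - ps_partial a z n) <= abs z ^+ n.
Proof.
move=> ha z1; elim: m => [|m IH] nm.
  by rewrite leqn0 in nm; rewrite (eqP nm) subrr abs0 expr0.
case: (ltngtP n m.+1) nm => // [nm|<-] _; last by rewrite subrr abs0 exprn_ge0 ?abs_ge0.
rewrite ps_partialS addrAC; apply: absD_le; first exact: IH.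
rewrite absM absX; apply: le_trans (_ : abs z ^+ m <= _); last first.
  by rewrite ler_wiXn2l ?abs_ge0.
by rewrite ler_piMl ?exprn_ge0 ?abs_ge0.
Qed.

Lemma ps_sum_exists a z : integral abs a -> abs z < 1 -> exists s, PS a z s.
Proof.
move=> ha z1.
have [l hl] : exists l, forall e : R, 0 < e -> exists N, forall n, (N <= n)%N ->
    abs (ps_partial a z n - l) < e.
  apply: hcompl => e e0; have [N hN] := geometric_lt (abs_ge0 z) z1 e0.
  exists N => m n mN nN; case: (leqP n m) => nm.
    exact: le_lt_trans (dist_ps_partial ha (ltW z1) nm) (hN _ nN).
  by rewrite distC; apply: le_lt_trans (dist_ps_partial ha (ltW z1) (ltnW nm)) (hN _ mN).
by exists l => e /hl[N hN]; exists N => n /hN; rewrite distC.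
Qed.

Lemma ps_sum_tail a z s n : integral abs a -> abs z < 1 -> PS a z s ->
  abs (s - ps_partial a z n) <= abs z ^+ n.
Proof.
move=> ha z1 hs; rewrite leNgt; apply/negP => hlt.
have [N hN] := hs _ (le_lt_trans (exprn_ge0 n (abs_ge0 z)) hlt).
set m := maxn N n.
have split_m : s - ps_partial a z n = (s - ps_partial a z m) + (ps_partial a z m - ps_partial a z n).
  by rewrite addrA subrK.
have := absD_lt (hN m (leq_maxl _ _))
  (le_lt_trans (dist_ps_partial ha (ltW z1) (leq_maxr N n)) hlt).
by rewrite -split_m ltxx.
Qed.

Lemma ps_sum_uniq a z s t : PS a z s -> PS a z t -> s = t.
Proof.
move=> hs ht; apply/eqP; rewrite -subr_eq0; apply/eqP; apply: abs_small_eq0 => e e0.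
have [N1 h1] := hs e e0; have [N2 h2] := ht e e0; set m := maxn N1 N2.
have -> : s - t = (s - ps_partial a z m) - (t - ps_partial a z m).
  by rewrite opprB addrA subrK.
by apply: absB_lt; [apply: h1; apply: leq_maxl|apply: h2; apply: leq_maxr].
Qed.

Lemma ps_evalE a z s : PS a z s -> EV a z = s.
Proof.
move=> hs; exact: ps_sum_uniq (epsilon_spec (inhabits 0) (PS a z) (ex_intro _ s hs)) hs.
Qed.

Lemma ps_evalP a z : integral abs a -> abs z < 1 -> PS a z (EV a z).
Proof. by move=> ha /(ps_sum_exists ha)[s hs]; rewrite (ps_evalE hs). Qed.

Lemma ps_sum_ext a b z s : a =1 b -> PS a z s -> PS b z s.
Proof. by move=> /functional_extensionality ->. Qed.

Lemma ps_sumD a b z s t : PS a z s -> PS b z t -> PS (fun n => a n + b n) z (s + t).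
Proof.
move=> hs ht e e0; have [N1 h1] := hs e e0; have [N2 h2] := ht e e0.
exists (maxn N1 N2) => n nN.
have -> : s + t - ps_partial (fun n => a n + b n) z n
        = (s - ps_partial a z n) + (t - ps_partial b z n).
  rewrite /ps_partial (eq_bigr (fun i : 'I_n => a i * z ^+ i + b i * z ^+ i)).
    by rewrite big_split /=; ring.
  by move=> i _; rewrite mulrDl.
by apply: absD_lt; [apply: h1|apply: h2]; apply: leq_trans nN; rewrite ?leq_maxl ?leq_maxr.
Qed.

Lemma ps_sumMl a z s c : PS a z s -> PS (fun n => c * a n) z (c * s).
Proof.
move=> hs e e0.
have partialM n : ps_partial (fun n => c * a n) z n = c * ps_partial a z n.
  by rewrite /ps_partial mulr_sumr; apply: eq_bigr => i _; rewrite mulrA.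
have [->|cn] := eqVneq c 0.
  by exists 0%N => n _; rewrite mul0r big1 ?subrr ?abs0 // => i _; rewrite !mul0r.
have [N hN] := hs (e / abs c) (divr_gt0 e0 (abs_gt0 cn)).
exists N => n /hN hn; rewrite -/(ps_partial (fun n => c * a n) z n) partialM -mulrBr absM.
by rewrite mulrC -ltr_pdivlMr ?abs_gt0.
Qed.

Lemma ps_sumB a b z s t : PS a z s -> PS b z t -> PS (fun n => a n - b n) z (s - t).
Proof.
move=> hs /(ps_sumMl (-1)) ht; have := ps_sumD hs ht.
by rewrite mulN1r; apply: ps_sum_ext => n; rewrite mulN1r.
Qed.

Lemma ps_sum_finite a z N : (forall n, (N <= n)%N -> a n = 0) -> PS a z (ps_partial a z N).
Proof.
move=> a0 e e0; exists N => n nN; rewrite -/(ps_partial a z n).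
rewrite -(subnK nN); elim: (n - N)%N => [|k IH]; first by rewrite subrr abs0.
by rewrite addSn ps_partialS a0 ?leq_addl // mul0r addr0.
Qed.

Lemma ps_sum_big J (A : nat -> series K) (v : nat -> K) z :
  (forall j, (j < J)%N -> PS (A j) z (v j)) ->
  PS (fun n => \sum_(j < J) A j n) z (\sum_(j < J) v j).
Proof.
elim: J => [|J IH] h.
  rewrite big_ord0; have := @ps_sum_finite (fun _ => 0) z 0 (fun _ _ => erefl).
  by rewrite /ps_partial big_ord0; apply: ps_sum_ext => n; rewrite big_ord0.
rewrite big_ord_recr; have := ps_sumD (IH (fun j jJ => h j (ltnW jJ))) (h J (ltnSn _)).
by apply: ps_sum_ext => n; rewrite big_ord_recr.
Qed.

Lemma integralB a b : integral abs a -> integral abs b -> integral abs (fun n => a n - b n).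
Proof. by move=> ha hb n; apply: absB_le. Qed.

Lemma integral_smul a b : integral abs a -> integral abs b -> integral abs (smul a b).
Proof. by move=> ha hb n; apply: abs_sum_le => // i _; apply: absM_le1. Qed.

Definition smulX (a : series K) : series K := fun n => if n is n'.+1 then a n' else 0.
Definition sshift j (a : series K) : series K := iter j smulX a.

Lemma integral_sshift j a : integral abs a -> integral abs (sshift j a).
Proof. by move=> ha; elim: j => [|j IH] //= [|n] /=; rewrite ?abs0 ?ler01. Qed.

Lemma sshiftE j a n : sshift j a n = if (j <= n)%N then a (n - j)%N else 0.
Proof. by elim: j n => [|j IH] [|n] //=; rewrite ?subn0 // -/(sshift j a) IH. Qed.

Lemma ps_sum_smulX a z s : abs z <= 1 -> PS a z s -> PS (smulX a) z (z * s).
Proof.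
move=> z1 hs e /hs[N hN]; exists N.+1 => [[|n]] // /hN.
have -> : \sum_(i < n.+1) smulX a i * z ^+ i = z * \sum_(i < n) a i * z ^+ i.
  rewrite big_ord_recl /= mul0r add0r mulr_sumr; apply: eq_bigr => i _.
  by rewrite /bump /= add1n exprS mulrCA.
by rewrite -mulrBr absM; apply: le_lt_trans; rewrite ler_piMl ?abs_ge0.
Qed.

Lemma ps_sum_sshift j a z s : abs z <= 1 -> PS a z s -> PS (sshift j a) z (z ^+ j * s).
Proof.
move=> z1 hs; elim: j => [|j IH]; first by rewrite expr0 mul1r.
by rewrite exprS -mulrA; apply: ps_sum_smulX.
Qed.

Lemma smul_sshift a b n : smul a b n = \sum_(j < n.+1) b j * sshift j a n.
Proof.
rewrite /smul -(big_mkord xpredT (fun i => a i * b (n - i)%N)).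
rewrite big_rev_mkord subn0; apply: eq_bigr => i _.
by rewrite sshiftE -ltnS ltn_ord subSS mulrC subKn // -ltnS.
Qed.

Lemma big_ord_narrow0 (F : nat -> K) m k : (m <= k)%N ->
  (forall j, (m <= j < k)%N -> F j = 0) -> \sum_(j < k) F j = \sum_(j < m) F j.
Proof.
move=> mk F0; rewrite [RHS](big_ord_widen k F mk) [RHS]big_mkcond.
by apply: eq_bigr => i _; case: ifP => // /negbT; rewrite -leqNgt => mi; rewrite F0 // mi ltn_ord.
Qed.

Lemma dist_ps_sum_agree S T z s v k : integral abs S -> integral abs T -> abs z < 1 ->
  (forall n, (n < k)%N -> T n = S n) -> PS S z s -> PS T z v ->
  abs (s - v) <= abs z ^+ k.
Proof.
move=> hS hT z1 hk hs hv; have := ps_sum_tail k (integralB hS hT) z1 (ps_sumB hs hv).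
by rewrite /ps_partial big1 ?subr0 // => i _; rewrite hk // subrr mul0r.
Qed.

Lemma ps_sum_approx S z L : integral abs S -> abs z < 1 ->
  (forall e : R, 0 < e -> exists k T v, [/\ integral abs T, (forall n, (n < k)%N -> T n = S n),
       PS T z v, abs (v - L) < e & abs z ^+ k < e]) ->
  PS S z L.
Proof.
move=> hS z1 h; suff -> : L = EV S z by apply: ps_evalP.
apply/eqP; rewrite -subr_eq0; apply/eqP; apply: abs_small_eq0 => e /h[k [T [v [hT hk hv hvL hz]]]].
have := dist_ps_sum_agree hS hT z1 hk (ps_evalP hS z1) hv.
have -> : L - EV S z = (L - v) - (EV S z - v) by rewrite opprB addrA subrK.
by move=> hc; apply: absB_lt; [rewrite distC|apply: le_lt_trans hc hz].
Qed.

Lemma abs_ps_eval_le1 a z : integral abs a -> abs z < 1 -> abs (EV a z) <= 1.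
Proof.
move=> ha z1; have := ps_sum_tail 0 ha z1 (ps_evalP ha z1).
by rewrite /ps_partial big_ord0 subr0 expr0.
Qed.

Lemma ps_sum_smul a b z : integral abs a -> integral abs b -> abs z < 1 ->
  PS (smul a b) z (EV a z * EV b z).
Proof.
move=> ha hb z1; apply: ps_sum_approx => //; first exact: integral_smul.
move=> e e0.
have [N1 h1] := ps_evalP hb z1 e0.
have [N2 h2] := geometric_lt (abs_ge0 z) z1 e0.
set k := maxn N1 N2.
exists k, (fun n => \sum_(j < k) b j * sshift j a n), (\sum_(j < k) b j * (z ^+ j * EV a z)); split.
- by move=> n; apply: abs_sum_le => // i _; apply: absM_le1 => //; apply: integral_sshift.
- move=> n nk; rewrite smul_sshift.
  apply: (@big_ord_narrow0 (fun j => b j * sshift j a n)) => // j /andP[nj _].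
  by rewrite sshiftE leqNgt nj mulr0.
- apply: (@ps_sum_big k (fun j n => b j * sshift j a n) (fun j => b j * (z ^+ j * EV a z))) => j _.
  by apply/ps_sumMl/ps_sum_sshift; [apply: ltW|apply: ps_evalP].
- have -> : \sum_(j < k) b j * (z ^+ j * EV a z) = EV a z * \sum_(j < k) b j * z ^+ j.
    by rewrite mulr_sumr; apply: eq_bigr => j _; rewrite mulrA mulrC.
  rewrite -(mulrBr (EV a z)) absM distC; apply: le_lt_trans (h1 k (leq_maxl _ _)).
  by rewrite ler_piMl ?abs_ge0 ?abs_ps_eval_le1.
- exact: h2 (leq_maxr _ _).
Qed.

Definition sone : series K := fun n => (n == 0)%:R.

Lemma integral_sone : integral abs sone.
Proof. by case => [|n]; rewrite /sone /= ?abs1 ?abs0 ?ler01. Qed.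

Lemma ps_sum_sone z : PS sone z 1.
Proof.
have sone_tail n : (1 <= n)%N -> sone n = 0 by case: n.
have := ps_sum_finite z sone_tail.
by rewrite /ps_partial big_ord1 expr0 mulr1.
Qed.

Lemma integral_sX : integral abs (sX K).
Proof. by case => [|[|n]]; rewrite /sX /= ?abs1 ?abs0 ?ler01. Qed.

Lemma ps_sum_sX z : PS (sX K) z z.
Proof.
have sX_tail n : (2 <= n)%N -> sX K n = 0 by case: n => [|[|n]].
have := ps_sum_finite z sX_tail.
by rewrite /ps_partial big_ord_recr big_ord1 /sX /= mul0r add0r mul1r expr1.
Qed.

Lemma integral_spow a k : integral abs a -> integral abs (spow a k).
Proof. by move=> ha; elim: k => [|k IH] /=; [apply: integral_sone|apply: integral_smul]. Qed.

Lemma ps_sum_spow a z k : integral abs a -> abs z < 1 -> PS (spow a k) z (EV a z ^+ k).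
Proof.
move=> ha z1; elim: k => [|k IH]; first exact: ps_sum_sone.
by rewrite exprS -(ps_evalE IH); apply: ps_sum_smul => //; apply: integral_spow.
Qed.

Lemma spow_small (a : series K) k n : a 0%N = 0 -> (n < k)%N -> spow a k n = 0.
Proof.
move=> a0; elim: k n => [|k IH] n //= nk; rewrite /smul big1 // => i _.
case: (posnP i) => [->|ip]; first by rewrite a0 mul0r.
by rewrite IH ?mulr0 //; have := ltn_ord i; lia.
Qed.

Lemma integral_scomp g h : integral abs g -> integral abs h -> integral abs (scomp g h).
Proof.
by move=> hg hh n; apply: abs_sum_le => // i _; apply: absM_le1 => //; apply: integral_spow.
Qed.

Lemma abs_ps_eval_le w z : integral abs w -> w 0%N = 0 -> abs z < 1 -> abs (EV w z) <= abs z.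
Proof.
move=> hw w0 z1; have := ps_sum_tail 1 hw z1 (ps_evalP hw z1).
by rewrite /ps_partial big_ord1 w0 mul0r subr0 expr1.
Qed.

Lemma ps_sum_scomp a w z : integral abs a -> integral abs w -> w 0%N = 0 -> abs z < 1 ->
  PS (scomp a w) z (EV a (EV w z)).
Proof.
move=> ha hw w0 z1; set y := EV w z.
have y1 : abs y < 1 by apply: le_lt_trans (abs_ps_eval_le hw w0 z1) z1.
apply: ps_sum_approx => //; first exact: integral_scomp.
move=> e e0.
have [N1 h1] := ps_evalP ha y1 e0.
have [N2 h2] := geometric_lt (abs_ge0 z) z1 e0.
set k := maxn N1 N2.
exists k, (fun n => \sum_(j < k) a j * spow w j n), (\sum_(j < k) a j * y ^+ j); split.
- by move=> n; apply: abs_sum_le => // i _; apply: absM_le1 => //; apply: integral_spow.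
- move=> n nk; apply: (@big_ord_narrow0 (fun j => a j * spow w j n)) => // j /andP[nj _].
  by rewrite spow_small ?mulr0.
- apply: (@ps_sum_big k (fun j n => a j * spow w j n) (fun j => a j * y ^+ j)) => j _.
  by apply/ps_sumMl/ps_sum_spow.
- by rewrite distC; apply: h1; apply: leq_maxl.
- exact: h2 (leq_maxr _ _).
Qed.

Lemma scomp0 (g h : series K) : g 0%N = 0 -> scomp g h 0%N = 0.
Proof. by move=> g0; rewrite /scomp big_ord1 g0 mul0r. Qed.

Lemma scomp1 (g h : series K) : g 0%N = 0 -> h 0%N = 0 -> scomp g h 1%N = g 1%N * h 1%N.
Proof.
move=> g0 h0; rewrite /scomp big_ord_recr big_ord1 /= g0 mul0r add0r.
by rewrite /smul big_ord_recr big_ord1 /= h0 mul0r add0r mulr1.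
Qed.

Lemma integral_siter g m : integral abs g -> integral abs (siter g m).
Proof. by move=> hg; elim: m => [|m IH] /=; [apply: integral_sX|apply: integral_scomp]. Qed.

Lemma siter0 (g : series K) m : g 0%N = 0 -> siter g m 0%N = 0.
Proof. by move=> g0; case: m => [|m] //=; rewrite scomp0. Qed.

Lemma siter1 (g : series K) m : g 0%N = 0 -> siter g m 1%N = g 1%N ^+ m.
Proof.
move=> g0; elim: m => [|m IH] /=; first by rewrite expr0.
by rewrite scomp1 ?siter0 // IH exprS.
Qed.

Lemma ps_sum_siter g m z : integral abs g -> g 0%N = 0 -> abs z < 1 ->
  PS (siter g m) z (iter m (EV g) z).
Proof.
move=> hg g0 z1; elim: m => [|m IH] /=; first exact: ps_sum_sX.
rewrite -(ps_evalE IH); apply: ps_sum_scomp => //; [exact: integral_siter|exact: siter0].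
Qed.

(* [t] only serves to guarantee that the disc contains nonzero points. *)
Lemma series_eq_of_ps_eval S T t : integral abs S -> integral abs T -> 0 < abs t -> abs t < 1 ->
  (forall z, abs z < 1 -> EV S z = EV T z) -> S = T.
Proof.
move=> hS hT t0 t1 hev; apply: functional_extensionality => n0.
apply/eqP; rewrite -subr_eq0; apply/negP => /negP hn.
set D := fun n => S n - T n.
have D0 z : abs z < 1 -> PS D z 0.
  by move=> z1; have := ps_sumB (ps_evalP hS z1) (ps_evalP hT z1); rewrite hev // subrr.
have [k Dk Dmin] := ex_minnP (ex_intro (fun n => D n != 0) n0 hn).
have [j hj] := geometric_lt (abs_ge0 t) t1 (abs_gt0 Dk).
have tn0 : t != 0 by apply: contraTneq t0 => ->; rewrite abs0 ltxx.
set z := t ^+ j.+1.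
have z0 : 0 < abs z by apply: abs_gt0; rewrite expf_neq0.
have z1 : abs z < 1 by rewrite absX exprn_ilt1 ?abs_ge0.
have zD : abs z < abs (D k).
  by apply: le_lt_trans (hj j (leqnn _)); rewrite absX ler_wiXn2l ?abs_ge0 // ltW.
have := ps_sum_tail k.+1 (integralB hS hT) z1 (D0 z z1).
have -> : ps_partial D z k.+1 = D k * z ^+ k.
  rewrite ps_partialS /ps_partial big1 ?add0r // => i _.
  have : ~~ (D i != 0) by apply/negP => /Dmin; rewrite leqNgt ltn_ord.
  by rewrite negbK => /eqP ->; rewrite mul0r.
rewrite sub0r absN absM absX exprS ler_pM2r ?exprn_gt0 //.
by rewrite leNgt zD.
Qed.

Definition slin (x : K) : series K := fun n => match n with 0 => - x | 1 => 1 | _ => 0 end.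

Lemma integral_slin x : abs x <= 1 -> integral abs (slin x).
Proof. by move=> x1 [|[|n]] /=; rewrite ?absN ?abs1 ?abs0 ?ler01. Qed.

Lemma ps_sum_slin x z : PS (slin x) z (z - x).
Proof.
have slin_tail n : (2 <= n)%N -> slin x n = 0 by case: n => [|[|n]].
have := ps_sum_finite z slin_tail.
by rewrite /ps_partial big_ord_recr big_ord1 /= expr0 mulr1 mul1r expr1 addrC.
Qed.

Lemma smul_slin0 x b : smul (slin x) b 0%N = - x * b 0%N.
Proof. by rewrite /smul big_ord1. Qed.

Lemma smul_slinS x b n : smul (slin x) b n.+1 = - x * b n.+1 + b n.
Proof.
rewrite /smul !big_ord_recl big1 ?addr0 /=; last by move=> i _; rewrite mul0r.
by rewrite subn0 /bump /= subSS subn0 mul1r.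
Qed.

(* The quotient by [X - x] is integral because [|x| < 1] and the partial sums of [a]
   at [x] approach [a(x) = 0] at the rate [|x|^n]. *)
Lemma ps_root_factor a x : integral abs a -> 0 < abs x -> abs x < 1 -> PS a x 0 ->
  exists2 g, integral abs g & a = smul (slin x) g.
Proof.
move=> ha x0 x1 hx.
have xn0 : x != 0 by apply: contraTneq x0 => ->; rewrite abs0 ltxx.
exists (fun k => - ps_partial a x k.+1 / x ^+ k.+1).
  move=> k; rewrite absM absN absV absX ler_pdivrMr ?exprn_gt0 // mul1r.
  by have := ps_sum_tail k.+1 ha x1 hx; rewrite sub0r absN.
apply: functional_extensionality => -[|n].
  by rewrite smul_slin0 /ps_partial big_ord1 expr0 mulr1 expr1; field.
rewrite smul_slinS ps_partialS [x ^+ n.+2]exprS.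
have : x ^+ n.+1 != 0 by rewrite expf_neq0.
by move: (x ^+ n.+1) => y y0; field; rewrite y0 xn0.
Qed.

Definition sprod_lin (s : seq K) (g : series K) : series K :=
  foldr (fun x acc => smul (slin x) acc) g s.

Lemma sprod_lin0 s g : sprod_lin s g 0%N = \prod_(x <- s) (- x) * g 0%N.
Proof.
elim: s => [|x s IH] /=; first by rewrite big_nil mul1r.
by rewrite smul_slin0 IH big_cons mulrA.
Qed.

Lemma integral_sprod_lin s g : (forall x, x \in s -> abs x <= 1) -> integral abs g ->
  integral abs (sprod_lin s g).
Proof.
elim: s => [|x s IH] hs hg //=; apply: integral_smul.
  by apply: integral_slin; apply: hs; rewrite inE eqxx.
by apply: IH => // y ys; apply: hs; rewrite inE ys orbT.
Qed.

Lemma ps_sum_sprod_lin s g z : (forall x, x \in s -> abs x <= 1) -> integral abs g -> abs z < 1 ->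
  PS (sprod_lin s g) z (\prod_(x <- s) (z - x) * EV g z).
Proof.
elim: s => [|x s IH] hs hg z1 /=; first by rewrite big_nil mul1r; apply: ps_evalP.
have hs' y : y \in s -> abs y <= 1 by move=> ys; apply: hs; rewrite inE ys orbT.
have := ps_sum_smul (integral_slin (hs x (mem_head _ _))) (integral_sprod_lin hs' hg) z1.
by rewrite (ps_evalE (ps_sum_slin x z)) (ps_evalE (IH hs' hg z1)) big_cons mulrA.
Qed.

(* Modulo the maximal ideal, [sprod_lin s g] is [X^(size s) * g] when all of [s] is small. *)
Lemma sprod_lin_reduction s g : (forall x, x \in s -> abs x < 1) -> integral abs g ->
  (forall k, (k < size s)%N -> abs (sprod_lin s g k) < 1) /\
  abs (sprod_lin s g (size s) - g 0%N) < 1.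
Proof.
elim: s => [|x s IH] hs hg /=; first by rewrite subrr abs0 ltr01.
have hs' y : y \in s -> abs y < 1 by move=> ys; apply: hs; rewrite inE ys orbT.
have hx : abs (- x) < 1 by rewrite absN; apply: hs; rewrite inE eqxx.
have [IH1 IH2] := IH hs' hg.
have hQ := integral_sprod_lin (fun y ys => ltW (hs' y ys)) hg.
split; last by rewrite smul_slinS -addrA; apply: absD_lt => //; apply: absM_lt1.
case => [|k] hk; first by rewrite smul_slin0; apply: absM_lt1.
by rewrite smul_slinS; apply: absD_lt; [apply: absM_lt1|apply: IH1].
Qed.

Lemma ps_roots_factor h s : integral abs h -> uniq s ->
  (forall x, x \in s -> [/\ 0 < abs x, abs x < 1 & PS h x 0]) ->
  exists2 g, integral abs g & h = sprod_lin s g.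
Proof.
elim: s h => [|x s IH] h hh us hs; first by exists h.
have [x0 x1 hx] := hs x (mem_head _ _).
have [h1 hh1 e1] := ps_root_factor hh x0 x1 hx.
case/andP: us => xs us.
suff [g hg e2] : exists2 g, integral abs g & h1 = sprod_lin s g.
  by exists g; rewrite // e1 e2.
apply: IH => // y ys; have [y0 y1 hy] := hs y (mem_behead (s := x :: s) ys); split => //.
have := ps_sum_smul (integral_slin (ltW x1)) hh1 y1.
rewrite -e1 (ps_evalE (ps_sum_slin x y)) => /(ps_sum_uniq hy)/esym/eqP.
rewrite mulf_eq0 subr_eq0 => /orP[/eqP yx|/eqP <-]; last exact: ps_evalP.
by move: xs; rewrite -yx ys.
Qed.

Lemma abs_prodN s r : (forall x, x \in s -> abs x = r) ->
  abs (\prod_(x <- s) (- x)) = r ^+ size s.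
Proof.
elim: s => [|x s IH] hs; first by rewrite big_nil abs1 expr0.
rewrite big_cons absM absN hs ?mem_head // IH ?exprS // => y ys.
by apply: hs; rewrite inE ys orbT.
Qed.

Lemma wideg_sprod_lin s g : (forall x, x \in s -> abs x < 1) -> integral abs g ->
  wideg_eq abs (sprod_lin s g) (size s) <-> ~ abs (g 0%N) < 1.
Proof.
move=> hs hg; have [low top] := sprod_lin_reduction hs hg.
split => [[top1 _] g0|g0]; last split => // top1.
  by apply: top1; rewrite -[sprod_lin _ _ _](subrK (g 0%N)); apply: absD_lt.
apply: g0; rewrite -[g 0%N](subKr (sprod_lin s g (size s))).
by apply: absB_lt; rewrite // distC.
Qed.

Lemma sprod_lin_extra_root s g z : (forall x, x \in s -> abs x <= 1) -> integral abs g ->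
  abs z < 1 -> z != 0 -> z \notin s -> PS (sprod_lin s g) z 0 -> abs (g 0%N) < 1.
Proof.
move=> hs hg z1 zn0 zs /(ps_sum_uniq (ps_sum_sprod_lin hs hg z1))/eqP.
rewrite mulf_eq0 prodf_seq_eq0 => /orP[/hasP[x xs /=]|/eqP gz].
  by rewrite subr_eq0 => /eqP zx; move: zs; rewrite zx xs.
have gz0 : PS g z 0 by rewrite -gz; apply: ps_evalP.
have [g' hg' ->] := ps_root_factor hg (abs_gt0 zn0) z1 gz0.
by rewrite smul_slin0; apply: absM_lt1; rewrite ?absN.
Qed.

Lemma ps_eval0 f : integral abs f -> f 0%N = 0 -> EV f 0 = 0.
Proof.
move=> hf f0; have := abs_ps_eval_le hf f0 (_ : abs 0 < 1).
by rewrite abs0 ltr01 => /(_ isT) h; apply: abs_eq0; apply/eqP; rewrite eq_le h abs_ge0.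
Qed.

Lemma abs_ps_eval_unit f lam x : integral abs f -> f 0%N = 0 -> f 1%N = lam -> abs lam = 1 ->
  abs x < 1 -> abs (EV f x) = abs x.
Proof.
move=> hf f0 f1 hl x1.
have [->|xn0] := eqVneq x 0; first by rewrite ps_eval0.
have := ps_sum_tail 2 hf x1 (ps_evalP hf x1).
rewrite /ps_partial big_ord_recr big_ord1 /= f0 f1 mul0r add0r expr1 => ht.
have hlx : abs (lam * x) = abs x by rewrite absM hl mul1r.
rewrite -hlx; apply: abs_eq_of_lt; rewrite hlx; apply: le_lt_trans ht _.
by rewrite expr2 -[X in _ < X]mulr1 ltr_pM2l ?abs_gt0.
Qed.

Lemma abs_iter_unit f lam x k : integral abs f -> f 0%N = 0 -> f 1%N = lam -> abs lam = 1 ->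
  abs x < 1 -> abs (iter k (EV f) x) = abs x.
Proof.
move=> hf f0 f1 hl x1; elim: k => [|k IH] //=.
by rewrite (abs_ps_eval_unit hf f0 f1 hl) // IH.
Qed.

Lemma periodic_neq0 f w N : integral abs f -> f 0%N = 0 -> (1 < N)%N ->
  min_period (EV f) w N -> w != 0.
Proof.
move=> hf f0 N1 [_ [_ hmin]]; apply/eqP => w0.
by apply: (hmin 1%N); rewrite ?N1 // w0 /= ps_eval0.
Qed.

Lemma cycle_root_bound h (F : K -> K) z0 N : integral abs h ->
  min_period F z0 N -> z0 != 0 -> abs z0 < 1 ->
  (forall i, abs (iter i F z0) = abs z0) ->
  (forall i, (i < N)%N -> PS h (iter i F z0) 0) ->
  let c := abs (h 0%N) `^ N%:R^-1 in
  [/\ c <= abs z0, abs z0 = c <-> wideg_eq abs h N &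
      abs z0 = c -> forall z, abs z < 1 -> z != 0 -> PS h z 0 -> exists k, z = iter k F z0].
Proof.
move=> hh hper z0n z1 habsF hroot c.
set s := [seq iter i F z0 | i <- iota 0 N].
have ss : size s = N by rewrite size_map size_iota.
have s_abs x : x \in s -> abs x = abs z0 by case/cycle_mem => i _ ->.
have s1 x : x \in s -> abs x < 1 by move=> /s_abs ->.
have [g hg eh] : exists2 g, integral abs g & h = sprod_lin s g.
  apply: ps_roots_factor (cycle_uniq hper) _ => // x xs.
  by case/cycle_mem: xs => i iN ->; rewrite habsF (abs_gt0 z0n) z1; split => //; apply: hroot.
have h0 : abs (h 0%N) = abs z0 ^+ N * abs (g 0%N).
  by rewrite eh sprod_lin0 absM -ss (abs_prodN s_abs).
have [c_le c_eq] := powR_inv_le (N := N) (proj1 hper) (abs_gt0 z0n) (abs_ge0 _) (hg 0%N) h0.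
have c_g : abs z0 = c <-> ~ abs (g 0%N) < 1.
  by rewrite -(abs_eq1 (hg 0%N)).
split => //; first by rewrite c_g eh -{1}ss; apply: iff_sym; apply: wideg_sprod_lin.
move=> /c_g g1 z zi zn hz; case: (boolP (z \in s)) => [/cycle_mem[i _ ->]|zs].
  by exists i.
by case: g1; apply: (sprod_lin_extra_root (fun x xs => ltW (s1 x xs)) hg zi zn zs); rewrite -eh.
Qed.

Lemma abs_iter_le g m z : integral abs g -> g 0%N = 0 -> abs z < 1 ->
  abs (iter m (EV g) z) <= abs z.
Proof.
move=> hg g0 z1; elim: m => [|m IH] //=.
exact: le_trans (abs_ps_eval_le hg g0 (le_lt_trans IH z1)) IH.
Qed.

Lemma iter_ps_eval_siter f M k z : integral abs f -> f 0%N = 0 -> abs z < 1 ->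
  iter k (EV (siter f M)) z = iter (M * k) (EV f) z.
Proof.
move=> hf f0 z1; elim: k => [|k IH]; first by rewrite muln0.
have y1 := le_lt_trans (abs_iter_le (M * k) hf f0 z1) z1.
by rewrite iterS IH (ps_evalE (ps_sum_siter M hf f0 y1)) mulnS iterD.
Qed.

Lemma siterM f M k t : integral abs f -> f 0%N = 0 -> 0 < abs t -> abs t < 1 ->
  siter (siter f M) k = siter f (M * k).
Proof.
move=> hf f0 t0 t1.
apply: (series_eq_of_ps_eval (integral_siter k (integral_siter M hf)) (integral_siter _ hf) t0 t1).
move=> z z1.
rewrite (ps_evalE (ps_sum_siter k (integral_siter M hf) (siter0 M f0) z1)).
by rewrite (ps_evalE (ps_sum_siter (M * k) hf f0 z1)) iter_ps_eval_siter.
Qed.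

(* [sgeom w k = \sum_(i < k) w^i X^(k-1-i)], so that [(w - X) sgeom w k = w^k - X^k]. *)
Fixpoint sgeom (w : series K) k : series K :=
  if k is k'.+1 then fun n => smul w (sgeom w k') n + sshift k' sone n else fun _ => 0.

Lemma integral_sgeom w k : integral abs w -> integral abs (sgeom w k).
Proof.
move=> hw; elim: k => [|k IH] /= n; first by rewrite abs0 ler01.
by apply: absD_le; [apply: integral_smul|apply: (integral_sshift k integral_sone)].
Qed.

Lemma ps_eval_sgeom w k z : integral abs w -> abs z < 1 ->
  (EV w z - z) * EV (sgeom w k) z = EV w z ^+ k - z ^+ k.
Proof.
move=> hw z1; elim: k => [|k IH].
  have := @ps_sum_finite (fun _ => 0) z 0 (fun _ _ => erefl).
  by rewrite /ps_partial big_ord0 /= => /ps_evalE ->; rewrite mulr0 subrr.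
have := ps_sumD (ps_sum_smul hw (integral_sgeom k hw) z1) (ps_sum_sshift k (ltW z1) (ps_sum_sone z)).
rewrite /= => /ps_evalE ->; rewrite mulr1 mulrDr mulrCA IH !exprS; ring.
Qed.

Lemma sgeom_small (w : series K) k n : w 0%N = 0 -> (n.+1 < k)%N -> sgeom w k n = 0.
Proof.
move=> w0; elim: k n => [|k IH] n //= nk.
rewrite sshiftE ifN; last by rewrite -ltnNge; lia.
rewrite addr0 /smul big1 // => i _.
case: (posnP i) => [->|ip]; first by rewrite w0 mul0r.
by rewrite IH ?mulr0 //; have := ltn_ord i; lia.
Qed.

(* [a o w - a = (w - X) * D] with [D = \sum_j a_j sgeom w j]; the truncation [T] of
   [D] to the indices [j <= k] evaluates by [ps_eval_sgeom] to a difference of partial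
   sums of [a]. *)
Lemma ps_eval_scomp_sub a w : integral abs a -> integral abs w -> w 0%N = 0 ->
  exists2 D, integral abs D & forall z, abs z < 1 ->
    EV (scomp a w) z - EV a z = (EV w z - z) * EV D z.
Proof.
move=> ha hw w0.
set D := fun n => \sum_(j < n.+2) a j * sgeom w j n.
have hD : integral abs D.
  by move=> n; apply: abs_sum_le => // i _; apply: absM_le1 => //; apply: integral_sgeom.
exists D => // z z1; set y := EV w z.
have y1 : abs y < 1 by apply: le_lt_trans (abs_ps_eval_le hw w0 z1) z1.
rewrite (ps_evalE (ps_sum_scomp ha hw w0 z1)) -/y.
apply/eqP; rewrite -subr_eq0; apply/eqP; apply: abs_small_eq0 => e e0.
have [N1 h1] := ps_evalP ha y1 e0.
have [N2 h2] := ps_evalP ha z1 e0.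
have [N3 h3] := geometric_lt (abs_ge0 z) z1 e0.
set k := maxn N1 (maxn N2 N3).
set T := fun n => \sum_(j < k.+1) a j * sgeom w j n.
set v := \sum_(j < k.+1) a j * EV (sgeom w j) z.
have hT : integral abs T.
  by move=> n; apply: abs_sum_le => // i _; apply: absM_le1 => //; apply: integral_sgeom.
have psT : PS T z v.
  apply: (@ps_sum_big k.+1 (fun j n => a j * sgeom w j n) (fun j => a j * EV (sgeom w j) z)).
  by move=> j _; apply/ps_sumMl/ps_evalP => //; apply: integral_sgeom.
have DT : abs (EV D z - v) <= abs z ^+ k.
  apply: dist_ps_sum_agree hD hT z1 _ (ps_evalP hD z1) psT => n nk.
  by apply: (@big_ord_narrow0 (fun j => a j * sgeom w j n)) => // j /andP[nj _]; rewrite sgeom_small ?mulr0.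
have yzv : (y - z) * v = ps_partial a y k.+1 - ps_partial a z k.+1.
  rewrite mulr_sumr /ps_partial -sumrB; apply: eq_bigr => j _.
  by rewrite mulrCA ps_eval_sgeom // mulrBr.
have -> : EV a y - EV a z - (y - z) * EV D z =
    (EV a y - ps_partial a y k.+1) - (EV a z - ps_partial a z k.+1) - (y - z) * (EV D z - v).
  by rewrite mulrBr yzv; ring.
apply: absB_lt; first by apply: absB_lt; [apply: h1|apply: h2]; apply: leqW; lia.
rewrite absM; apply: le_lt_trans (h3 k _); last by lia.
by apply: le_trans DT; rewrite ler_piMl ?abs_ge0 // absB_le // ltW.
Qed.

Definition subX (a : series K) : series K := fun n => a n - sX K n.

Lemma integral_subX a : integral abs a -> integral abs (subX a).
Proof. by move=> ha; apply: integralB ha integral_sX. Qed.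

Lemma ps_sum_subX a z : integral abs a -> abs z < 1 -> PS (subX a) z (EV a z - z).
Proof. by move=> ha z1; apply: ps_sumB (ps_evalP ha z1) (ps_sum_sX z). Qed.

Lemma ps_root_subX_siter f m x : integral abs f -> f 0%N = 0 -> abs x < 1 ->
  iter m (EV f) x = x -> PS (subX (siter f m)) x 0.
Proof.
move=> hf f0 x1 hx; have := ps_sum_subX (integral_siter m hf) x1.
by rewrite (ps_evalE (ps_sum_siter m hf f0 x1)) hx subrr.
Qed.

(* [g^(k+1) - X = (g o g^k - g) + (g - X)], the first term by [ps_eval_scomp_sub]. *)
Lemma siter_subX_dvd g t : integral abs g -> g 0%N = 0 -> 0 < abs t -> abs t < 1 ->
  forall k, exists2 h, integral abs h & subX (siter g k) = smul h (subX g).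
Proof.
move=> hg g0 t0 t1; elim=> [|k [h hh eh]].
  exists (fun _ => 0) => [n|]; first by rewrite abs0 ler01.
  by apply: functional_extensionality => n; rewrite /subX subrr /smul big1 // => i _; rewrite mul0r.
set w := siter g k.
have hw : integral abs w := integral_siter k hg.
have [D hD eD] := ps_eval_scomp_sub hg hw (siter0 k g0).
exists (fun n => sone n + smul h D n) => [n|].
  by apply: absD_le; [apply: integral_sone|apply: integral_smul].
have hgX := integral_subX hg.
apply: (series_eq_of_ps_eval (integral_subX (integral_siter k.+1 hg)) _ t0 t1) => [|z z1].
  by apply: integral_smul => // n; apply: absD_le; [apply: integral_sone|apply: integral_smul].
have wz : EV w z - z = EV h z * (EV g z - z).
  rewrite -(ps_evalE (ps_sum_subX hw z1)) /w eh.
  by rewrite (ps_evalE (ps_sum_smul hh hgX z1)) (ps_evalE (ps_sum_subX hg z1)).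
rewrite (ps_evalE (ps_sum_subX (integral_siter k.+1 hg) z1)).
rewrite (ps_evalE (ps_sum_smul _ hgX z1)); last first.
  by move=> n; apply: absD_le; [apply: integral_sone|apply: integral_smul].
rewrite (ps_evalE (ps_sumD (ps_sum_sone z) (ps_sum_smul hh hD z1))).
rewrite (ps_evalE (ps_sum_subX hg z1)) /= -/w.
by rewrite -[EV (scomp g w) z](subrK (EV g z)) eD // wz; ring.
Qed.

Lemma ps_root_smulX h x : integral abs h -> x != 0 -> abs x < 1 ->
  PS (smulX h) x 0 -> PS h x 0.
Proof.
move=> hh xn0 x1 /(ps_sum_uniq (ps_sum_smulX (ltW x1) (ps_evalP hh x1)))/eqP.
by rewrite mulf_eq0 (negbTE xn0) => /eqP <-; apply: ps_evalP.
Qed.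

Lemma wideg_smulX h N : wideg_eq abs (smulX h) N.+1 <-> wideg_eq abs h N.
Proof.
split=> -[h1 h2]; split => //; first by move=> k kN; apply: (h2 k.+1).
by case=> [|k] kN; rewrite /= ?abs0 ?ltr01 //; apply: h2.
Qed.

Lemma periodic_point_bound lam q f : abs lam = 1 -> (0 < q)%N -> integral abs f ->
  f 0%N = 0 -> f 1%N = lam -> lam ^+ q != 1 ->
  forall w0, abs w0 < 1 -> min_period (EV f) w0 q -> (q = 1%N -> w0 != 0) ->
  let c := abs (lam ^+ q - 1) `^ (q%:R^-1) in
  [/\ c <= abs w0,
      (abs w0 = c <-> wideg_eq abs (subX (siter f q)) q.+1) &
      (abs w0 = c ->
         (forall w, abs w < 1 -> w != 0 -> min_period (EV f) w q ->
            exists k, w = iter k (EV f) w0) /\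
         (forall k, abs (iter k (EV f) w0) = c))].
Proof.
move=> hl q0 hf f0 f1 lq w0 w1 hper hq1 c.
have w0n : w0 != 0.
  case: (ltngtP q 1) => [|q1|/hq1//]; first by rewrite ltnNge q0.
  exact: periodic_neq0 hf f0 q1 hper.
set h : series K := fun k => subX (siter f q) k.+1.
have eG : subX (siter f q) = smulX h.
  by apply: functional_extensionality => -[|n] //; rewrite /subX siter0 // subr0.
have hh : integral abs h by move=> n; exact: (integral_subX (integral_siter q hf) n.+1).
have h0 : h 0%N = lam ^+ q - 1 by rewrite /h /subX siter1 // f1.
have root x : abs x < 1 -> x != 0 -> iter q (EV f) x = x -> PS h x 0.
  move=> x1 xn hx; apply: ps_root_smulX => //.
  by rewrite -eG; apply: ps_root_subX_siter.
have absF i : abs (iter i (EV f) w0) = abs w0 := abs_iter_unit i hf f0 f1 hl w1.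
have cycle_root i : (i < q)%N -> PS h (iter i (EV f) w0) 0.
  move=> _; apply: root; rewrite -?abs_eq0E ?absF ?abs_eq0E //.
  exact: iter_cycle_fixed (proj1 (proj2 hper)).
have := cycle_root_bound hh hper w0n w1 absF cycle_root; rewrite h0 -/c.
move=> [c_le c_eq c_uniq]; split => //; first by rewrite c_eq eG wideg_smulX.
move=> w0c; split => [w wi wn [_ [hw _]]|k]; last by rewrite absF.
exact: c_uniq w0c w wi wn (root w wi wn hw).
Qed.

Section Quotient.
Variables (f h : series K) (M N : nat).
Hypotheses (hf : integral abs f) (f0 : f 0%N = 0) (hh : integral abs h).
Hypothesis quoE : subX (siter f N) = smul h (subX (siter f M)).

Lemma quotient_coef0 : f 1%N ^+ M != 1 -> h 0%N = (f 1%N ^+ N - 1) / (f 1%N ^+ M - 1).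
Proof.
move=> fM; have := congr1 (fun a => a 1%N) quoE.
rewrite /= /smul big_ord_recr big_ord1 /subX /= !siter1 // !siter0 // /sX /= subrr mulr0 addr0.
by move=> ->; rewrite mulfK // subr_eq0.
Qed.

Lemma ps_root_quotient z : abs z < 1 ->
  iter N (EV f) z = z -> iter M (EV f) z != z -> PS h z 0.
Proof.
move=> z1 hN hM; have := ps_root_subX_siter hf f0 z1 hN; rewrite quoE.
move=> /(ps_sum_uniq (ps_sum_smul hh (integral_subX (integral_siter M hf)) z1))/eqP.
rewrite (ps_evalE (ps_sum_subX (integral_siter M hf) z1)) (ps_evalE (ps_sum_siter M hf f0 z1)).
by rewrite mulf_eq0 subr_eq0 (negbTE hM) orbF => /eqP <-; apply: ps_evalP.
Qed.

Lemma periodic_quotient_bound z0 : abs (f 1%N) = 1 -> (0 < M < N)%N -> f 1%N ^+ M != 1 ->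
  abs z0 < 1 -> min_period (EV f) z0 N ->
  let c := abs ((f 1%N ^+ N - 1) / (f 1%N ^+ M - 1)) `^ (N%:R^-1) in
  [/\ c <= abs z0, abs z0 = c <-> wideg_eq abs h N &
      abs z0 = c -> forall z, abs z < 1 -> min_period (EV f) z N -> exists k, z = iter k (EV f) z0].
Proof.
move=> hl /andP[M0 MN] fM z1 hper c.
have N1 : (1 < N)%N := leq_ltn_trans M0 MN.
have z0n := periodic_neq0 hf f0 N1 hper.
have absF i : abs (iter i (EV f) z0) = abs z0 := abs_iter_unit i hf f0 erefl hl z1.
have cycle_root i : (i < N)%N -> PS h (iter i (EV f) z0) 0.
  move=> iN; apply: ps_root_quotient; first by rewrite absF.
    exact: iter_cycle_fixed (proj1 (proj2 hper)).
  by apply: iter_cycle_not_fixed hper _ iN; rewrite M0.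
have := cycle_root_bound hh hper z0n z1 absF cycle_root; rewrite quotient_coef0 // -/c.
move=> [c_le c_eq c_uniq]; split => // z0c z zi zper.
have [_ [hz hmin]] := zper.
apply: (c_uniq z0c z zi (periodic_neq0 hf f0 N1 zper)); apply: ps_root_quotient zi hz _.
by apply/eqP; apply: hmin; rewrite M0.
Qed.

End Quotient.

Lemma periodic_point_bound_pn lam q p f : prime p -> abs lam = 1 -> (0 < q)%N ->
  integral abs f -> f 0%N = 0 -> f 1%N = lam ->
  forall n : nat, (1 <= n)%N -> lam ^+ (q * p ^ n) != 1 ->
  forall z0, abs z0 < 1 -> min_period (EV f) z0 (q * p ^ n) ->
  let c := abs ((lam ^+ (q * p ^ n) - 1) / (lam ^+ (q * p ^ n.-1) - 1))
             `^ ((q * p ^ n)%:R^-1) in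
  [/\ c <= abs z0,
      (forall h, integral abs h ->
         subX (siter f (q * p ^ n)) = smul h (subX (siter f (q * p ^ n.-1))) ->
         (abs z0 = c <-> wideg_eq abs h (q * p ^ n))) &
      (abs z0 = c ->
         (forall z, abs z < 1 -> min_period (EV f) z (q * p ^ n) ->
            exists k, z = iter k (EV f) z0) /\
         (forall k, abs (iter k (EV f) z0) = c))].
Proof.
move=> pr hl q0 hf f0 f1 n n1 lN z0 z1 hper c; subst lam.
have eN : (q * p ^ n = q * p ^ n.-1 * p)%N by rewrite -mulnA -expnSr prednK.
have MN : (0 < q * p ^ n.-1 < q * p ^ n)%N.
  by rewrite eN muln_gt0 q0 expn_gt0 prime_gt0 //= ltn_Pmulr ?prime_gt1 // muln_gt0 q0 expn_gt0 prime_gt0.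
have lM : f 1%N ^+ (q * p ^ n.-1) != 1.
  by apply: contraNneq lN => e; rewrite eN exprM e expr1n.
have z0n : z0 != 0.
  by apply: periodic_neq0 hf f0 _ hper; case/andP: MN; apply: leq_ltn_trans.
have [h hh eh] :=
  siter_subX_dvd (integral_siter (q * p ^ n.-1) hf) (siter0 _ f0) (abs_gt0 z0n) z1 p.
rewrite (siterM _ _ hf f0 (abs_gt0 z0n) z1) -eN in eh.
have [c_le _ c_uniq] := periodic_quotient_bound hf f0 hh eh hl MN lM z1 hper.
split => // [h' hh' eh'|z0c].
  by case: (periodic_quotient_bound hf f0 hh' eh' hl MN lM z1 hper).
by split => [|k]; [exact: c_uniq|rewrite (abs_iter_unit _ hf f0 erefl hl z1)].
Qed.

End Ultrametric.

Theorem lemma2p3 (K : fieldType) (R : realType) (abs : K -> R)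
  (habs : ultrametric_abs abs) (hcompl : abs_complete abs)
  (p : nat) (hp : prime p) (hres : abs (p%:R : K) < 1)
  (lam : K) (hlam : abs lam = 1)
  (q : nat) (hq0 : (0 < q)%N) (hq : abs (lam ^+ q - 1) < 1)
  (hqmin : forall k, (0 < k < q)%N -> ~ (abs (lam ^+ k - 1) < 1))
  (f : series K) (hfint : integral abs f) (hf0 : f 0%N = 0) (hf1 : f 1%N = lam) :
  let F := ps_eval abs f in
  (* (1) *)
  (lam ^+ q != 1 ->
   forall w0, abs w0 < 1 -> min_period F w0 q -> (q = 1%N -> w0 != 0) ->
   let c := abs (lam ^+ q - 1) `^ (q%:R^-1) in
   [/\ c <= abs w0,
       (abs w0 = c <-> wideg_eq abs (fun k => siter f q k - sX K k) q.+1) &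
       (abs w0 = c ->
          (forall w, abs w < 1 -> w != 0 -> min_period F w q ->
             exists k, w = iter k F w0) /\
          (forall k, abs (iter k F w0) = c))]) /\
  (* (2) *)
  (forall n : nat, (1 <= n)%N -> lam ^+ (q * p ^ n) != 1 ->
   forall z0, abs z0 < 1 -> min_period F z0 (q * p ^ n) ->
   let c := abs ((lam ^+ (q * p ^ n) - 1) / (lam ^+ (q * p ^ n.-1) - 1))
              `^ ((q * p ^ n)%:R^-1) in
   [/\ c <= abs z0,
       (forall h : series K, integral abs h ->
          (fun k => siter f (q * p ^ n) k - sX K k) =
            smul h (fun k => siter f (q * p ^ n.-1) k - sX K k) ->
          (abs z0 = c <-> wideg_eq abs h (q * p ^ n))) &
       (abs z0 = c ->
          (forall z, abs z < 1 -> min_period F z (q * p ^ n) ->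
             exists k, z = iter k F z0) /\
          (forall k, abs (iter k F z0) = c))]).
Proof.
have absN1 := absN1_eq1 habs (prime_gt0 hp) hres.
move=> F; split.
  exact: (periodic_point_bound habs absN1 hcompl hlam hq0 hfint hf0 hf1).
exact: (periodic_point_bound_pn habs absN1 hcompl hp hlam hq0 hfint hf0 hf1).
Qed.
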